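(* Let $p<q$ be coprime positive integers, $m$ a positive integer, $j\in\{3,4\}$ and $R=\mathbb C[X_0,X_1,X_j]$. Define $\mu:\mathbb Z^3\to\mathbb Z^3$, $\mu(d_0,d_1,d_j)=(d_0-pd_1+qd_j,\;d_1-d_j,\;pd_1-qd_j)$ (injective), $\Lambda=\mu(\mathbb Z_{\ge0}^3)$, and for $\lambda\in\Lambda$ let $f_\lambda=X_0^{d_0}X_1^{d_1}X_j^{d_j}$ where $\mu(d_0,d_1,d_j)=\lambda$. For $(n,c)$ with $(n,c,\omega)\in\Lambda$ for some $\omega$, let $\omega_{(n,c)}=\min\{\omega:(n,c,\omega)\in\Lambda\}$. For $(n,d)\in\mathbb Z\times\mathbb Z/m\mathbb Z$ let $\Lambda_{(n,d)}=\{(n,c,\omega)\in\Lambda: c\equiv d \pmod m\}$ and $c_{(n,d)}=\min\{c\in\mathbb Z: c\equiv d\pmod m,\ (n,c,\omega)\in\Lambda\text{ for some }\omega\}$. Let $\lambda=(n,c,\omega)$ and $\lambda'=(n,c',\omega')$ be elements of $\Lambda_{(n,d)}$. Then, with ideals taken in $R$: (i) if $c=c'$, then $f_\lambda-f_{\lambda'}\in(X_0^{q-p}-X_1X_j)$; (ii) if $c>c_{(n,d)}$, then $f_\lambda\in(X_0^{q-p}-X_1X_j,\;X_0^{mp}X_1^m)$; (iii) $f_\lambda-f_{\lambda'}\in(X_0^{q-p}-X_1X_j,\;1-X_0^{mp}X_1^m)$. If moreover $m=a(q-p)$ for a positive integer $a$, then: (iv) if $\omega=\omega'$, then $f_\lambda-f_{\lambda'}\in(1-X_1^{aq}X_j^{ap})$;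 (v) if $\omega=\omega_{(n,c)}$ and $\omega'=\omega_{(n,c')}$, then $\omega=\omega'$, and in particular $f_\lambda-f_{\lambda'}\in(1-X_1^{aq}X_j^{ap})$.
   Context: The minima $\omega_{(n,c)}$ and $c_{(n,d)}$ exist (the defining sets are nonempty and bounded below). The first coordinate of $\mu$ is the weight of the monomial under the $\mathbb C^*$-action with weights $1,-p,q$ on $X_0,X_1,X_j$, and $c\bmod m$ is its $\mu_m$-weight. *)

(* multinomials (mpoly) over the complex numbers R[i],
   R a realType (so R[i] is the field of complex numbers). *)
From HB Require Import structures.
From mathcomp Require Import all_boot all_order all_algebra.
From mathcomp Require Import reals.
From mathcomp Require Import complex.
From mathcomp Require Import mpoly.
Set Implicit Arguments. Unset Strict Implicit. Unset Printing Implicit Defensive.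
Import Order.TTheory GRing.Theory Num.Theory.
Local Open Scope ring_scope.

Definition mu (p q : nat) (d : nat * nat * nat) : int * int * int :=
  let: (d0, d1, dj) := d in
  ((d0%:Z - p%:Z * d1%:Z + q%:Z * dj%:Z)%R,
   (d1%:Z - dj%:Z)%R,
   (p%:Z * d1%:Z - q%:Z * dj%:Z)%R).

Definition inLambda (p q : nat) (l : int * int * int) : Prop :=
  exists d : nat * nat * nat, mu p q d = l.

Definition is_min (S : int -> Prop) (x : int) : Prop :=
  S x /\ forall y, S y -> (x <= y)%R.

Definition is_omega_min (p q : nat) (n c w : int) : Prop :=
  is_min (fun w' => inLambda p q (n, c, w')) w.

(* c_{(n,d)} = min { c | c = d mod m, exists w, (n,c,w) in Lambda },
   the class d in Z/mZ being represented by an integer dcl *)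
Definition is_c_min (p q m : nat) (n dcl c0 : int) : Prop :=
  is_min (fun c => (c == dcl %[mod m%:Z])%Z /\ exists w, inLambda p q (n, c, w)) c0.

(* R = C[X_0, X_1, X_j]; the three variables are indexed by 'I_3,
   index 2 standing for X_j (j in {3,4}). *)
Notation Cpoly R := {mpoly (R[i]) [3]}.
Definition i0 : 'I_3 := @Ordinal 3 0 isT.
Definition i1 : 'I_3 := @Ordinal 3 1 isT.
Definition ij : 'I_3 := @Ordinal 3 2 isT.

(* f_lambda = X_0^d0 X_1^d1 X_j^dj, where mu(d0,d1,dj) = lambda *)
Definition fmon (R : realType) (d : nat * nat * nat) : Cpoly R :=
  let: (d0, d1, dj) := d in 'X_i0 ^+ d0 * 'X_i1 ^+ d1 * 'X_ij ^+ dj.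

Definition in_ideal1 (R : realType) (g f : Cpoly R) : Prop :=
  exists h : Cpoly R, f = h * g.

Definition in_ideal2 (R : realType) (g1 g2 f : Cpoly R) : Prop :=
  exists h1 h2 : Cpoly R, f = h1 * g1 + h2 * g2.

From HB Require Import structures.
From mathcomp Require Import all_boot all_order all_algebra.
From mathcomp Require Import reals complex mpoly.
From mathcomp Require Import zify ring.
Set Implicit Arguments. Unset Strict Implicit. Unset Printing Implicit Defensive.
Import Order.TTheory GRing.Theory Num.Theory.
Local Open Scope ring_scope.

(* Exponent vectors d with the same (n, c) form a chain along which one step
   trades X_1 X_j for X_0^(q-p), so their monomials agree modulo
   g = X_0^(q-p) - X_1 X_j: this is (i).  Multiplying by X_0^(mp) X_1^m keeps n
   and raises c by m, which reduces (ii) and (iii) to (i).  Since n + w = d_0,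
   vectors with the same (n, w) have the same d_0, and coprimality of p and q
   makes them differ by a multiple of (0, q, p), i.e. by a power of X_1^q X_j^p:
   this gives (iv).  Finally w = p c (mod q-p), and minimality of w forces
   d_0 < q - p, so d_0 = n + w, hence w, is determined by c modulo q - p: (v). *)

Section Ideals.
Variable R : realType.
Implicit Types g u x y h f : Cpoly R.

Lemma in_ideal1_subC g f f' : in_ideal1 g (f - f') -> in_ideal1 g (f' - f).
Proof. by move=> [h def_f]; exists (- h); rewrite -opprB def_f mulNr. Qed.

Lemma in_ideal2_subC g u f f' : in_ideal2 g u (f - f') -> in_ideal2 g u (f' - f).
Proof.
by move=> [h [h' def_f]]; exists (- h), (- h'); rewrite -opprB def_f !mulNr opprD.
Qed.

Lemma in_ideal1_mul_subrXX x y h k : in_ideal1 (x - y) (h * x ^+ k - h * y ^+ k).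
Proof.
by exists (h * \sum_(i < k) x ^+ (k.-1 - i) * y ^+ i); rewrite -mulrBr subrXX; ring.
Qed.

Lemma in_ideal2_of_sub_mulr g u h f : in_ideal1 g (h * u - f) -> in_ideal2 g u f.
Proof. by move=> [h' def_f]; exists (- h'), h; rewrite mulNr -def_f; ring. Qed.

Lemma in_ideal2_sub_of_sub_mulrX g u h f k :
  in_ideal1 g (h * u ^+ k - f) -> in_ideal2 g (1 - u) (h - f).
Proof.
move=> [h' def_f]; have [s def_h] := in_ideal1_mul_subrXX 1 u h k.
by exists h', s; rewrite -def_f -def_h expr1n; ring.
Qed.

End Ideals.

Lemma eqz_mod_le_add_mul (m : nat) (c c' : int) :
  (c == c' %[mod m%:Z])%Z -> c <= c' -> exists k : nat, c' = c + (k * m)%N%:Z.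
Proof.
rewrite eq_sym eqz_mod_dvd => /dvdzP [[k|k] def_c] le_cc'; first by exists k; lia.
by exists 0%N; nia.
Qed.

Lemma coprime_mul_eq (p q x y : nat) :
  (0 < q)%N -> coprime p q -> (p * x = q * y)%N -> exists t, x = (q * t)%N /\ y = (p * t)%N.
Proof.
move=> q_gt0 co_pq pxqy; have co_qp : coprime q p by rewrite coprime_sym.
have /dvdnP [t def_x] : (q %| x)%N by rewrite -(Gauss_dvdr x co_qp) pxqy dvdn_mulr.
exists t; split; first by rewrite def_x mulnC.
apply/eqP; rewrite -(eqn_pmul2l q_gt0) -pxqy def_x; apply/eqP; ring.
Qed.

Section Exponents.
Variables p q : nat.

Lemma mu_n_add_omega d n c w : mu p q d = (n, c, w) -> n + w = d.1.1%:Z.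
Proof. by case: d => [[d0 d1] dj] [<- _ <-] /=; lia. Qed.

Lemma mu_omega_mod d n c w : (p <= q)%N ->
  mu p q d = (n, c, w) -> (w == p%:Z * c %[mod (q - p)%N%:Z])%Z.
Proof.
case: d => [[d0 d1] dj] le_pq [_ <- <-]; rewrite eqz_mod_dvd; apply/dvdzP; exists (- dj%:Z).
by rewrite -(subzn le_pq); ring.
Qed.

Lemma mu_shift_c m k d0 d1 dj n c w : mu p q (d0, d1, dj) = (n, c, w) ->
  mu p q ((d0 + m * p * k)%N, (d1 + m * k)%N, dj) =
  (n, c + (k * m)%N%:Z, w + (p * (k * m))%N%:Z).
Proof. by case=> <- <- <-; congr (_, _, _); lia. Qed.

Lemma mu_eq_nc d0 d1 dj e0 e1 ej n c w w' : (p <= q)%N ->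
  mu p q (d0, d1, dj) = (n, c, w) -> mu p q (e0, e1, ej) = (n, c, w') ->
  (d1 <= e1)%N ->
  exists k, [/\ d0 = (e0 + (q - p) * k)%N, e1 = (d1 + k)%N & ej = (dj + k)%N].
Proof.
move=> le_pq [<- <- _] [en ec _] le_de.
by exists (e1 - d1)%N; split; nia.
Qed.

Lemma mu_eq_nw d0 d1 dj e0 e1 ej n c c' w : (p < q)%N -> coprime p q ->
  mu p q (d0, d1, dj) = (n, c, w) -> mu p q (e0, e1, ej) = (n, c', w) ->
  (d1 <= e1)%N ->
  exists t, [/\ e0 = d0, e1 = (d1 + q * t)%N, ej = (dj + p * t)%N
              & c' = c + ((q - p) * t)%N%:Z].
Proof.
move=> lt_pq co_pq [<- <- <-] [en <- ew] le_de.
have le_dej : (dj <= ej)%N by nia.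
have [t [e1E ejE]] : exists t, (e1 - d1 = q * t)%N /\ (ej - dj = p * t)%N.
  by apply: coprime_mul_eq => //; nia.
by exists t; split; nia.
Qed.

Lemma omega_min_fst_lt d n c w : (p < q)%N ->
  is_omega_min p q n c w -> mu p q d = (n, c, w) -> (d.1.1 < q - p)%N.
Proof.
case: d => [[d0 d1] dj] lt_pq [_ w_min] [en ec ew] /=; rewrite ltnNge; apply/negP => le_d0.
have /w_min : inLambda p q (n, c, w - (q - p)%N%:Z).
  by exists ((d0 - (q - p))%N, d1.+1, dj.+1); congr (_, _, _); lia.
lia.
Qed.

Lemma omega_min_eq d e n c c' w w' : (p < q)%N ->
  is_omega_min p q n c w -> is_omega_min p q n c' w' ->
  mu p q d = (n, c, w) -> mu p q e = (n, c', w') ->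
  (c == c' %[mod (q - p)%N%:Z])%Z -> w = w'.
Proof.
move=> lt_pq w_min w'_min hd he cc'; have le_pq := ltnW lt_pq.
have d0_lt := omega_min_fst_lt lt_pq w_min hd.
have e0_lt := omega_min_fst_lt lt_pq w'_min he.
suff : d.1.1%:Z = e.1.1%:Z by move: (mu_n_add_omega hd) (mu_n_add_omega he); lia.
have : (d.1.1%:Z == e.1.1%:Z %[mod (q - p)%N%:Z])%Z.
  rewrite -(mu_n_add_omega hd) -(mu_n_add_omega he) eqz_modDl.
  rewrite (eqP (mu_omega_mod le_pq hd)) (eqP (mu_omega_mod le_pq he)).
  by move: cc'; rewrite !eqz_mod_dvd -mulrBr; apply: dvdz_mull.
by rewrite !modz_small ?lez_nat ?ltz_nat // => /eqP.
Qed.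

End Exponents.

Section Monomials.
Variables (R : realType) (p q : nat).
Local Notation X0 := ('X_i0 : Cpoly R).
Local Notation X1 := ('X_i1 : Cpoly R).
Local Notation Xj := ('X_ij : Cpoly R).
Local Notation g := (X0 ^+ (q - p) - X1 * Xj).

Lemma fmon_shift_c m k d0 d1 dj :
  fmon R ((d0 + m * p * k)%N, (d1 + m * k)%N, dj) =
  fmon R (d0, d1, dj) * (X0 ^+ (m * p) * X1 ^+ m) ^+ k.
Proof. by rewrite /fmon !exprD exprMn -!exprM; ring. Qed.

Lemma fmon_sub_in_ideal_eq_nc d e n c w w' : (p <= q)%N ->
  mu p q d = (n, c, w) -> mu p q e = (n, c, w') -> in_ideal1 g (fmon R d - fmon R e).
Proof.
move=> le_pq; case: d e => [[d0 d1] dj] [[e0 e1] ej].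
wlog le_de : d0 d1 dj e0 e1 ej w w' / (d1 <= e1)%N => [sym hd he | hd he].
  have [le_de|/ltnW le_ed] := leqP d1 e1; first exact: sym le_de hd he.
  by apply/in_ideal1_subC; apply: sym le_ed he hd.
have [k [-> -> ->]] := mu_eq_nc le_pq hd he le_de.
have -> : fmon R ((e0 + (q - p) * k)%N, d1, dj) - fmon R (e0, (d1 + k)%N, (dj + k)%N) =
    fmon R (e0, d1, dj) * (X0 ^+ (q - p)) ^+ k - fmon R (e0, d1, dj) * (X1 * Xj) ^+ k.
  by rewrite /fmon !exprD exprMn -exprM; ring.
exact: in_ideal1_mul_subrXX.
Qed.

Lemma fmon_in_ideal2_c_gt m k d e n c w w' : (p <= q)%N ->
  mu p q d = (n, c, w) -> mu p q e = (n, c + (k.+1 * m)%N%:Z, w') ->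
  in_ideal2 g (X0 ^+ (m * p) * X1 ^+ m) (fmon R e).
Proof.
case: d => [[d0 d1] dj] le_pq hd he.
apply: (in_ideal2_of_sub_mulr (h := fmon R (d0, d1, dj) * (X0 ^+ (m * p) * X1 ^+ m) ^+ k)).
rewrite -mulrA -exprSr -fmon_shift_c.
exact: fmon_sub_in_ideal_eq_nc le_pq (mu_shift_c _ _ hd) he.
Qed.

Lemma fmon_sub_in_ideal2_c_add m k d e n c w w' : (p <= q)%N ->
  mu p q d = (n, c, w) -> mu p q e = (n, c + (k * m)%N%:Z, w') ->
  in_ideal2 g (1 - X0 ^+ (m * p) * X1 ^+ m) (fmon R d - fmon R e).
Proof.
case: d => [[d0 d1] dj] le_pq hd he.
apply: (in_ideal2_sub_of_sub_mulrX (k := k)); rewrite -fmon_shift_c.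
exact: fmon_sub_in_ideal_eq_nc le_pq (mu_shift_c _ _ hd) he.
Qed.

Lemma fmon_sub_in_ideal_eq_nw a d e n c c' w : (p < q)%N -> coprime p q ->
  mu p q d = (n, c, w) -> mu p q e = (n, c', w) ->
  (c == c' %[mod (a * (q - p))%N%:Z])%Z ->
  in_ideal1 (1 - X1 ^+ (a * q) * Xj ^+ (a * p)) (fmon R d - fmon R e).
Proof.
move=> lt_pq co_pq; case: d e => [[d0 d1] dj] [[e0 e1] ej].
wlog le_de : d0 d1 dj e0 e1 ej c c' / (d1 <= e1)%N => [sym hd he cc' | hd he cc'].
  have [le_de|/ltnW le_ed] := leqP d1 e1; first exact: sym le_de hd he cc'.
  by apply/in_ideal1_subC; apply: sym le_ed he hd _; rewrite eq_sym.
have [t [-> -> -> c'E]] := mu_eq_nw lt_pq co_pq hd he le_de.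
have /dvdnP [r ->] : (a %| t)%N.
  rewrite -(dvdn_pmul2r (_ : 0 < q - p)%N) ?subn_gt0 // [(t * _)%N]mulnC.
  move: cc'; rewrite c'E -{1}(addr0 c) eqz_modDl eq_sym eqz_mod_dvd subr0.
  by rewrite dvdzE.
have -> : fmon R (d0, d1, dj) - fmon R (d0, (d1 + q * (r * a))%N, (dj + p * (r * a))%N) =
    fmon R (d0, d1, dj) * 1 ^+ r - fmon R (d0, d1, dj) * (X1 ^+ (a * q) * Xj ^+ (a * p)) ^+ r.
  have -> : (q * (r * a) = a * q * r)%N by nia.
  have -> : (p * (r * a) = a * p * r)%N by nia.
  by rewrite /fmon expr1n exprMn -!exprM !exprD; ring.
exact: in_ideal1_mul_subrXX.
Qed.

End Monomials.

Theorem lemma4p18 (R : realType) (p q m : nat)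
  (hp : (0 < p)%N) (hpq : (p < q)%N) (hcop : coprime p q) (hm : (0 < m)%N)
  (dcl : int) (d d' : nat * nat * nat) (n c w c' w' : int)
  (hl : mu p q d = (n, c, w)) (hl' : mu p q d' = (n, c', w'))
  (hc : (c == dcl %[mod m%:Z])%Z) (hc' : (c' == dcl %[mod m%:Z])%Z) :
  let f := fmon R d in
  let f' := fmon R d' in
  let g := 'X_i0 ^+ (q - p) - 'X_i1 * 'X_ij : Cpoly R in
  [/\ (c = c' -> in_ideal1 g (f - f')),
      (forall c0, is_c_min p q m n dcl c0 -> c0 < c ->
         in_ideal2 g ('X_i0 ^+ (m * p) * 'X_i1 ^+ m) f),
      in_ideal2 g (1 - 'X_i0 ^+ (m * p) * 'X_i1 ^+ m) (f - f')
    & forall a : nat, (0 < a)%N -> m = (a * (q - p))%N ->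
      (w = w' -> in_ideal1 (1 - 'X_i1 ^+ (a * q) * 'X_ij ^+ (a * p)) (f - f'))
      /\ (is_omega_min p q n c w -> is_omega_min p q n c' w' ->
          w = w' /\ in_ideal1 (1 - 'X_i1 ^+ (a * q) * 'X_ij ^+ (a * p)) (f - f'))].
Proof.
move=> f f' g; have le_pq := ltnW hpq.
have cc' : (c == c' %[mod m%:Z])%Z by rewrite (eqP hc) (eqP hc').
split.
- by move=> eq_cc'; rewrite eq_cc' in hl; exact: fmon_sub_in_ideal_eq_nc le_pq hl hl'.
- move=> c0 [[c0_dcl [w0 [e he]]] _] lt_c0c.
  have c0c : (c0 == c %[mod m%:Z])%Z by rewrite (eqP c0_dcl) (eqP hc).
  have [[|k] cE] := eqz_mod_le_add_mul c0c (ltW lt_c0c).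
    by move: lt_c0c; rewrite cE; lia.
  by rewrite cE in hl; exact: fmon_in_ideal2_c_gt le_pq he hl.
- have [le_cc'|/ltW le_c'c] := lerP c c'.
    have [k c'E] := eqz_mod_le_add_mul cc' le_cc'.
    by rewrite c'E in hl'; exact: fmon_sub_in_ideal2_c_add le_pq hl hl'.
  rewrite eq_sym in cc'; have [k cE] := eqz_mod_le_add_mul cc' le_c'c.
  by rewrite cE in hl; apply/in_ideal2_subC; exact: fmon_sub_in_ideal2_c_add le_pq hl' hl.
- move=> a a_gt0 m_eq; rewrite m_eq in cc'.
  have ideal_v : w = w' -> in_ideal1 (1 - 'X_i1 ^+ (a * q) * 'X_ij ^+ (a * p)) (f - f').
    by move=> eq_ww'; rewrite eq_ww' in hl; exact: fmon_sub_in_ideal_eq_nw hpq hcop hl hl' cc'.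
  split=> // w_min w'_min.
  have cc'_qp : (c == c' %[mod (q - p)%N%:Z])%Z.
    by move: cc'; rewrite !eqz_mod_dvd PoszM; apply: dvdz_trans; rewrite dvdz_mull.
  have eq_ww' := omega_min_eq hpq w_min w'_min hl hl' cc'_qp.
  by split; last exact: ideal_v.
Qed.
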